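(* Consider a complete 4-node network with nodes $A,B,C,D$, where for each ordered pair of distinct nodes $(X,Y)$ the directed link $XY$ has capacity $XY>0$. Define \[ I^*=\min\{BA+CA,BA+DA,CA+DA,AB+CB,AB+DB,CB+DB,AC+BC,AC+DC,BC+DC,AD+BD,AD+CD,BD+CD\}, \] i.e., the minimum, over all nodes, of the sum of the capacities of any two distinct incoming links to that node. For an unordered pair $\{X,Y\}$ write $\widehat{XY}=XY+YX$. Then for any positive value $R<I^*$, at least three of $\widehat{AB},\widehat{AC},\widehat{AD},\widehat{BC},\widehat{BD},\widehat{CD}$ are strictly greater than $R$.
   Context: Here $XY$ denotes the capacity (maximum number of bits per unit time) of the directed link from node $X$ to node $Y$. *)

From Stdlib Require Import Reals List.
Import ListNotations.
Open Scope R_scope.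

Definition list_min (x : R) (l : list R) : R := fold_right Rmin x l.

Fixpoint count_gt (r : R) (l : list R) : nat :=
  match l with
  | [] => 0%nat
  | x :: t => ((if Rlt_dec r x then 1 else 0) + count_gt r t)%nat
  end.

Definition Istar (AB AC AD BA BC BD CA CB CD DA DB DC : R) : R :=
  list_min (BA + CA)
    [BA + DA; CA + DA; AB + CB; AB + DB; CB + DB;
     AC + BC; AC + DC; BC + DC; AD + BD; AD + CD; BD + CD].

(* Call a pair {X,Y} weak when XY + YX <= R. Along a cycle of weak pairs,
   each node has two incoming cycle links whose capacities sum to at least
   I* > R, so the cycle carries more than R per node; but the same links,
   grouped by pairs, carry at most R per pair, and a cycle has as many pairs
   as nodes. Hence the weak pairs contain no cycle, i.e. form a forest on four
   nodes, which has at most three edges; the other three pairs exceed R. *)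
From Stdlib Require Import Reals List Lra Lia.
Import ListNotations.
Open Scope R_scope.

Definition exceeds (r x : R) : bool := if Rlt_dec r x then true else false.

Lemma count_gt_filter (r : R) (l : list R) :
  count_gt r l = length (filter (exceeds r) l).
Proof.
  induction l as [|x l IH]; simpl; [reflexivity|].
  unfold exceeds; destruct (Rlt_dec r x); simpl; rewrite IH; reflexivity.
Qed.

Lemma lt_list_min (r x : R) (l : list R) :
  r < list_min x l -> Forall (Rlt r) (x :: l).
Proof.
  induction l as [|y l IH]; simpl; intros Hr.
  - constructor; [exact Hr | constructor].
  - assert (Hy : r < y) by (eapply Rlt_le_trans; [exact Hr | apply Rmin_l]).
    assert (Hl : r < fold_right Rmin x l)
      by (eapply Rlt_le_trans; [exact Hr | apply Rmin_r]).
    apply IH in Hl; inversion Hl; repeat constructor; auto.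
Qed.

Lemma existsb_exceeds_of_sum (r : R) (l : list R) :
  INR (length l) * r < fold_right Rplus 0 l -> existsb (exceeds r) l = true.
Proof.
  induction l as [|x l IH]; cbn [length fold_right existsb]; intros Hsum.
  - simpl in Hsum; lra.
  - unfold exceeds at 1; destruct (Rlt_dec r x); [reflexivity|].
    apply IH; rewrite S_INR in Hsum; lra.
Qed.

(* The six arguments are the edges AB, AC, AD, BC, BD, CD of K4; the
   hypotheses say that f selects an edge of each of its 4 triangles and
   3 quadrilaterals. *)
Lemma K4_feedback_edge_set_card {E : Type} (f : E -> bool)
    (ab ac ad bc bd cd : E) :
  existsb f [ab; ac; bc] = true -> existsb f [ab; ad; bd] = true ->
  existsb f [ac; ad; cd] = true -> existsb f [bc; bd; cd] = true ->
  existsb f [ab; bc; cd; ad] = true -> existsb f [ab; bd; cd; ac] = true ->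
  existsb f [ac; bc; bd; ad] = true ->
  (3 <= length (filter f [ab; ac; ad; bc; bd; cd]))%nat.
Proof.
  simpl; destruct (f ab), (f ac), (f ad), (f bc), (f bd), (f cd);
    simpl; intros; first [discriminate | lia].
Qed.

Theorem theorem2 (AB AC AD BA BC BD CA CB CD DA DB DC Rt : R) :
  0 < AB -> 0 < AC -> 0 < AD -> 0 < BA -> 0 < BC -> 0 < BD ->
  0 < CA -> 0 < CB -> 0 < CD -> 0 < DA -> 0 < DB -> 0 < DC ->
  0 < Rt -> Rt < Istar AB AC AD BA BC BD CA CB CD DA DB DC ->
  le 3 (count_gt Rt [AB + BA; AC + CA; AD + DA; BC + CB; BD + DB; CD + DC]).
Proof.
  intros _ _ _ _ _ _ _ _ _ _ _ _ _ Hmin.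
  apply lt_list_min in Hmin.
  repeat (apply Forall_cons_iff in Hmin as [? Hmin]).
  rewrite count_gt_filter.
  apply K4_feedback_edge_set_card; apply existsb_exceeds_of_sum; simpl; lra.
Qed.
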